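(* For a positive integer $k>1$ let $G_k=P_{(2k+2)^2} \times P_{(2k+1)^2}$. Then $\dim_{k,f}(G_k)=\Theta(k^2)$ as $k\to\infty$; consequently both $\frac{\dim_{1,f}(G_k)}{\dim_{k,f}(G_k)}$ and $\frac{\dim_{k,f}(G_k)}{\dim_f(G_k)}$ can be arbitrarily large (they are unbounded as $k\to\infty$).
   Context: $P_n$ is the path on $n$ vertices and $\times$ denotes the Cartesian product (grid graph). $d(x,y)$ is the distance in $G$. For a function $g$ on $V(G)$ and $U\subseteq V(G)$, $g(U)=\sum_{s\in U}g(s)$. $R\{x,y\}=\{z: d(x,z)\ne d(y,z)\}$; $g:V(G)\to[0,1]$ is a resolving function if $g(R\{x,y\})\ge1$ for all distinct $x,y$, and $\dim_f(G)$ is the minimum of $g(V(G))$ over resolving functions. For a positive integer $k$, $d_k(x,y)=\min\{d(x,y),k+1\}$, $R_k\{x,y\}=\{z: d_k(x,z)\neq d_k(y,z)\}$; $h:V(G)\to[0,1]$ is a $k$-truncated resolving function if $h(R_k\{x,y\})\ge 1$ for all distinct $x,y$, and $\dim_{k,f}(G)$ is the minimum of $h(V(G))$ over such $h$. $f=\Theta(g)$ means $c_1|g|\le|f|\le c_2|g|$ for some positive constants and all sufficiently large arguments. *)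

From HB Require Import structures.
From mathcomp Require Import all_boot all_order all_algebra.
From mathcomp Require Import boolp classical_sets reals.
Set Implicit Arguments. Unset Strict Implicit. Unset Printing Implicit Defensive.
Import Order.TTheory GRing.Theory Num.Theory.

Definition path_adj (n : nat) : rel 'I_n :=
  fun i j => (i.+1 == j :> nat) || (j.+1 == i :> nat).

Definition cart_adj (T1 T2 : finType) (e1 : rel T1) (e2 : rel T2) : rel (T1 * T2) :=
  fun x y => ((x.1 == y.1) && e2 x.2 y.2) || ((x.2 == y.2) && e1 x.1 y.1).

Definition grid_adj (m n : nat) : rel ('I_m * 'I_n) :=
  cart_adj (@path_adj m) (@path_adj n).

Fixpoint ball (T : finType) (e : rel T) (r : nat) (x : T) : {set T} :=
  match r with
  | 0 => [set x]
  | r'.+1 => ball e r' x :|: [set z | [exists y in ball e r' x, e y z]]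
  end.

(* Graph distance: least r with y in ball r x (searched in 0..#|T|-1;
   value #|T| if unreachable, which never happens in connected graphs). *)
Definition gdist (T : finType) (e : rel T) (x y : T) : nat :=
  find (fun r => y \in ball e r x) (iota 0 #|T|).

Definition tdist (T : finType) (e : rel T) (k : nat) (x y : T) : nat :=
  minn (gdist e x y) k.+1.

Definition resolving_set (T : finType) (d : T -> T -> nat) (x y : T) : {set T} :=
  [set z | d x z != d y z].

Definition resolving_fun (R : realType) (T : finType) (d : T -> T -> nat)
    (g : T -> R) : Prop :=
  (forall s, 0 <= g s <= 1)%R /\
  (forall x y, x != y -> (1 <= \sum_(z in resolving_set d x y) g z)%R).

Definition frac_dim (R : realType) (T : finType) (d : T -> T -> nat) : R :=
  inf [set (\sum_(s : T) g s)%R | g in @resolving_fun R T d].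

Definition dimf (R : realType) (T : finType) (e : rel T) : R :=
  frac_dim R (gdist e).
Definition dimkf (R : realType) (T : finType) (e : rel T) (k : nat) : R :=
  frac_dim R (tdist e k).

Unset Implicit Arguments.
Definition Gk (k : nat) := @grid_adj ((2 * k + 2) ^ 2)%N ((2 * k + 1) ^ 2)%N.

From HB Require Import structures.
From mathcomp Require Import all_boot all_order all_algebra.
From mathcomp Require Import boolp classical_sets reals.
From mathcomp Require Import zify.
Import Order.TTheory GRing.Theory Num.Theory.

(* Lower bounds: for horizontally adjacent x, x', every vertex resolving x
   and x' for the t-truncated distance lies within distance t of x or x'.
   Pairs spaced 2t+2 apart horizontally and 2t+1 vertically thus have
   disjoint resolving sets, and each pair forces weight 1 on any resolving
   function; this packs (2k+2)(2k+1) pairs in G_k for t = k and (k+1)^2 k^2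
   pairs for t = 1.
   Upper bounds: the points of a lattice of mesh s, clamped to the grid, form
   a resolving set when 2s <= t, because three corners of the cell containing
   a vertex are within truncation range and their Manhattan distances pin the
   vertex down. Mesh k/2 gives O(k^2) landmarks for dim_{k,f}(G_k), and a
   single cell resolves the whole grid for the untruncated distance, so
   dim_f(G_k) <= 4. *)

Set Implicit Arguments. Unset Strict Implicit. Unset Printing Implicit Defensive.
Local Open Scope ring_scope.

Section FractionalDimension.
Variables (R : realType) (T : finType) (d : T -> T -> nat).

Lemma frac_dim_le_sum (g : T -> R) : resolving_fun d g -> frac_dim R d <= \sum_s g s.
Proof.
move=> dg; apply: ge_inf; last by exists g.
by exists 0 => _ [h [h01 _] <-]; apply: sumr_ge0 => s _; case/andP: (h01 s).
Qed.

Lemma frac_dim_le_card (L : {set T}) :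
  (forall x y, {in L, forall z, d x z = d y z} -> x = y) ->
  frac_dim R d <= #|L|%:R.
Proof.
move=> Lres; pose g z : R := if z \in L then 1 else 0.
have -> : #|L|%:R = \sum_z g z by rewrite -big_mkcond sumr_const.
apply: frac_dim_le_sum; split=> [z|x y xy].
  by rewrite /g; case: (z \in L); rewrite lexx ler01.
have [z zL dz] : exists2 z, z \in L & d x z != d y z.
  apply/exists_inP; apply: contraR xy => /exists_inPn dL.
  by apply/eqP/Lres => z /dL /negPn /eqP.
rewrite (bigD1 z) ?inE //= {1}/g zL lerDl sumr_ge0 // => s _.
by rewrite /g; case: (s \in L); rewrite ?ler01.
Qed.

(* Makes the constant function 1 resolving, so [frac_dim] is the infimum of a
   nonempty set. *)
Hypothesis d_separates : forall x y, (forall z, d x z = d y z) -> x = y.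

Lemma frac_dim_ge (r : R) :
  (forall g, resolving_fun d g -> r <= \sum_s g s) -> r <= frac_dim R d.
Proof.
move=> gr; apply: lb_le_inf; last by move=> _ [g dg <-]; apply: gr.
exists (\sum_(s : T) (1 : R)), (fun _ => 1) => //; split=> [s|x y xy].
  by rewrite lexx ler01.
have [z dz] : exists z, d x z != d y z.
  apply/existsP; apply: contraR xy => /existsPn dxy.
  by apply/eqP/d_separates => z; apply/eqP/negPn.
by rewrite (bigD1 z) ?inE //= lerDl sumr_ge0 // => s _; rewrite ler01.
Qed.

Lemma frac_dim_ge_disjoint (I : finType) (x y : I -> T) :
  (forall i, x i != y i) ->
  (forall i j, i != j ->
     [disjoint resolving_set d (x i) (y i) & resolving_set d (x j) (y j)]) ->
  #|I|%:R <= frac_dim R d.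
Proof.
move=> xy disj; apply: frac_dim_ge => g [g01 gres].
have g0 s : 0 <= g s by case/andP: (g01 s).
apply: le_trans (_ : \sum_(s in \bigcup_i resolving_set d (x i) (y i)) g s <= _).
  rewrite partition_disjoint_bigcup // -sum1_card natr_sum.
  by apply: ler_sum => i _; apply: gres.
by rewrite [X in _ <= X](bigID [in \bigcup_i resolving_set d (x i) (y i)]) /= lerDl sumr_ge0.
Qed.

End FractionalDimension.

Section GraphDistance.
Variables (T : finType) (e : rel T).

Lemma gdist_eq0 x y : (gdist e x y == 0)%N = (x == y).
Proof.
rewrite /gdist; have : (0 < #|T|)%N by apply/card_gt0P; exists x.
case: #|T| => //= n _; rewrite inE.
by case: (eqVneq y x).
Qed.

Lemma tdist_separates t x y : (forall z, tdist e t x z = tdist e t y z) -> x = y.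
Proof.
move/(_ y); rewrite /tdist => dxy; apply/eqP; rewrite -gdist_eq0.
by move: (gdist_eq0 y y) dxy; rewrite eqxx; lia.
Qed.

Lemma tdist_card t : (#|T| <= t)%N -> tdist e t = gdist e.
Proof.
move=> Tt; apply/funext => x; apply/funext => y.
have := find_size (fun r => y \in ball e r x) (iota 0 #|T|).
by rewrite size_iota /tdist /gdist; lia.
Qed.

Lemma tdist_eq_near t x y z : (gdist e x z <= t)%N ->
  tdist e t x z = tdist e t y z -> gdist e y z = gdist e x z.
Proof. by rewrite /tdist; lia. Qed.

Lemma mem_resolving_set_tdist t x y z : z \in resolving_set (tdist e t) x y ->
  (gdist e x z <= t)%N || (gdist e y z <= t)%N.
Proof. by rewrite inE /tdist; lia. Qed.

End GraphDistance.

Lemma find_iota_leq D L : (D < L)%N -> find (fun r => D <= r)%N (iota 0 L) = D.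
Proof.
move=> DL; rewrite -(subnKC (ltnW DL)) iotaD find_cat size_iota.
case: hasP => [[r]|_]; first by rewrite mem_iota; lia.
by rewrite -(subnSK DL) /= leqnn addn0.
Qed.

Lemma divn_unique q d a : (q * d <= a < q * d + d -> a %/ d = q)%N.
Proof.
case/andP=> lo hi; have d0 : (0 < d)%N by lia.
by rewrite -(subnKC lo) divnMDl // divn_small ?addn0 //; lia.
Qed.

Section Grid.
Variables m n : nat.
Implicit Types x y z : 'I_m * 'I_n.

Definition manhattan x y : nat :=
  ((x.1 - y.1) + (y.1 - x.1) + ((x.2 - y.2) + (y.2 - x.2)))%N.

Lemma grid_adjE x y : grid_adj x y = (manhattan x y == 1)%N.
Proof.
case: x y => [a b] [c d]; rewrite /grid_adj /cart_adj /path_adj /manhattan /=.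
apply/idP/eqP => [|dist1].
  by case/orP=> /andP[/eqP-> /orP[] /eqP]; lia.
have [eq_ac|ac] := eqVneq a c; first by subst; lia.
have [eq_bd|bd] := eqVneq b d; first by subst; apply/orP; right; lia.
by move: ac bd; rewrite -!val_eqE /=; lia.
Qed.

Lemma manhattan_eq0 x y : (manhattan x y == 0)%N = (x == y).
Proof.
case: x y => [a b] [c d]; rewrite /manhattan xpair_eqE -!val_eqE /=; lia.
Qed.

Lemma manhattan_step x z : (0 < manhattan x z)%N ->
  exists y, grid_adj y z && (manhattan x y == (manhattan x z).-1)%N.
Proof.
case: x z => [a b] [c d]; rewrite /manhattan /= => xz.
have cm := ltn_ord c; have dn := ltn_ord d.
have [ac|ca] := ltnP a c.
  exists (Ordinal (leq_ltn_trans (leq_pred c) cm), d).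
  by rewrite grid_adjE /manhattan /=; lia.
have [ca'|ac'] := ltnP c a.
  have lt : (c.+1 < m)%N by have := ltn_ord a; lia.
  by exists (Ordinal lt, d); rewrite grid_adjE /manhattan /=; lia.
have [bd|db] := ltnP b d.
  exists (c, Ordinal (leq_ltn_trans (leq_pred d) dn)).
  by rewrite grid_adjE /manhattan /=; lia.
have lt : (d.+1 < n)%N by have := ltn_ord b; lia.
by exists (c, Ordinal lt); rewrite grid_adjE /manhattan /=; lia.
Qed.

Lemma ball_grid r x : ball (@grid_adj m n) r x = [set z | manhattan x z <= r]%N.
Proof.
elim: r => [|r IH] /=; apply/setP=> z; rewrite !inE.
  by rewrite leqn0 manhattan_eq0 eq_sym.
rewrite IH inE; apply/orP/idP => [[//|/existsP[y /andP[]]]|xz]; first lia.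
  by rewrite !inE grid_adjE => xy /eqP yz; move: xy yz; rewrite /manhattan; lia.
have [|rxz] := leqP (manhattan x z) r; [by left | right].
have [y /andP[yz /eqP xy]] := manhattan_step (leq_ltn_trans (leq0n r) rxz).
by apply/existsP; exists y; rewrite yz inE xy andbT; lia.
Qed.

Lemma gdist_grid x y : gdist (@grid_adj m n) x y = manhattan x y.
Proof.
rewrite /gdist; under eq_find => r do rewrite ball_grid inE.
apply: find_iota_leq; rewrite card_prod !card_ord.
case: x y => [a b] [c d]; rewrite /manhattan /=.
by have := ltn_ord a; have := ltn_ord c; have := ltn_ord b; have := ltn_ord d; nia.
Qed.

Lemma manhattan_corners x y (c c' : 'I_m) (d d' : 'I_n) :
  (c <= x.1 <= c')%N -> (d <= x.2 <= d')%N ->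
  manhattan y (c, d) = manhattan x (c, d) ->
  manhattan y (c', d') = manhattan x (c', d') ->
  manhattan y (c, d') = manhattan x (c, d') -> y = x.
Proof.
case: x y => [a b] [p q]; rewrite /manhattan /= => ca db *.
by apply/eqP; rewrite xpair_eqE -!val_eqE /=; lia.
Qed.

End Grid.

Lemma landmark_interval s M a : (0 < s)%N -> (a < M)%N ->
  exists2 i, (i.+1 < (M - 1) %/ s + 2)%N &
    (minn (i * s) (M - 1) <= a <= minn (i.+1 * s) (M - 1))%N &&
    (minn (i.+1 * s) (M - 1) - minn (i * s) (M - 1) <= s)%N.
Proof.
move=> s0 aM; exists (a %/ s)%N.
  by rewrite addn2 !ltnS leq_div2r //; lia.
by have := leq_divM a s; have := ltn_ceil a s0; rewrite mulSn; lia.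
Qed.

Section GridFracDim.
Variables (R : realType) (m n : nat).
Local Notation d t := (tdist (@grid_adj m n) t).

Lemma grid_tdim_ge t P Q I J : (2 * t + 2 <= P)%N -> (2 * t + 1 <= Q)%N ->
  (I * P <= m)%N -> (J * Q <= n)%N -> (I * J)%:R <= frac_dim R (d t).
Proof.
move=> tP tQ IP JQ.
have xm (i : 'I_I) : ((i * P).+1 < m)%N by have := ltn_ord i; nia.
have yn (j : 'I_J) : (j * Q < n)%N by have := ltn_ord j; nia.
pose x (ij : 'I_I * 'I_J) := (Ordinal (ltnW (xm ij.1)), Ordinal (yn ij.2)).
pose x' (ij : 'I_I * 'I_J) := (Ordinal (xm ij.1), Ordinal (yn ij.2)).
have cell ij z : z \in resolving_set (d t) (x ij) (x' ij) ->
    ((z.1 + t) %/ P = ij.1 /\ (z.2 + t) %/ Q = ij.2)%N.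
  move/mem_resolving_set_tdist; rewrite !gdist_grid /manhattan /= => near.
  by split; apply: divn_unique; lia.
rewrite -[I]card_ord -[J]card_ord -card_prod.
apply: (frac_dim_ge_disjoint _ (@tdist_separates _ _ t) (x := x) (y := x'))
  => [ij|[i j] [i' j'] ij_neq].
  by apply/eqP => /(congr1 (fun p => nat_of_ord p.1)) /=; lia.
rewrite -setI_eq0; apply: contraNT ij_neq.
case/set0Pn=> z /setIP[/cell[/= i1 j1] /cell[/= i2 j2]].
by rewrite xpair_eqE -!val_eqE /= -i1 -j1 i2 j2 !eqxx.
Qed.

Lemma grid_tdim_le s t : (0 < m)%N -> (0 < n)%N -> (0 < s)%N -> (2 * s <= t)%N ->
  frac_dim R (d t) <= (((m - 1) %/ s + 2) * ((n - 1) %/ s + 2))%:R.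
Proof.
move=> m0 n0 s0 st; set p := ((m - 1) %/ s + 2)%N; set q := ((n - 1) %/ s + 2)%N.
have clamp_m i : (minn (i * s) (m - 1) < m)%N by lia.
have clamp_n j : (minn (j * s) (n - 1) < n)%N by lia.
pose corner i j : 'I_m * 'I_n := (Ordinal (clamp_m i), Ordinal (clamp_n j)).
pose L := [set corner (val ij.1) (val ij.2) | ij in [set: 'I_p * 'I_q]].
apply: le_trans (@frac_dim_le_card R _ _ L _) _; last first.
  by rewrite ler_nat (leq_trans (leq_imset_card _ _)) // cardsT card_prod !card_ord.
move=> y [a b] agree.
have [i ip /andP[ai si]] := landmark_interval s0 (ltn_ord a).
have [j jq /andP[bj sj]] := landmark_interval s0 (ltn_ord b).
have near i' j' : (i' <= i.+1)%N -> (j' <= j.+1)%N ->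
    (manhattan (a, b) (corner i' j') <= t)%N ->
    manhattan y (corner i' j') = manhattan (a, b) (corner i' j').
  move=> ii jj xt; rewrite -!gdist_grid; apply: (tdist_eq_near (t := t)).
    by rewrite gdist_grid.
  have ip' : (i' < p)%N by lia.
  have jq' : (j' < q)%N by lia.
  by rewrite agree //; apply/imsetP; exists (Ordinal ip', Ordinal jq').
apply: (manhattan_corners (c := Ordinal (clamp_m i)) (c' := Ordinal (clamp_m i.+1))
          (d := Ordinal (clamp_n j)) (d' := Ordinal (clamp_n j.+1))) => //;
  apply: near => //; rewrite /manhattan /=; move: ai si bj sj;
  move: (minn (i * s) _) (minn (i.+1 * s) _) (minn (j * s) _) (minn (j.+1 * s) _);
  clear -st; lia.
Qed.

End GridFracDim.

Section MetricDimension.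
Variables (R : realType) (T : finType) (e : rel T).

Lemma dimf_ge1 (x y : T) : x != y -> 1 <= dimf R e.
Proof.
move=> xy; rewrite /dimf -(tdist_card e (leqnn #|T|)).
have := frac_dim_ge_disjoint R (@tdist_separates _ e #|T|)
  (x := fun _ : unit => x) (y := fun=> y).
by rewrite card_unit; apply=> // [[]] [].
Qed.

End MetricDimension.

Lemma grid_dimf_le4 (R : realType) m n :
  (0 < m)%N -> (0 < n)%N -> dimf R (@grid_adj m n) <= 4.
Proof.
move=> m0 n0; have mn0 : (0 < m * n)%N by rewrite muln_gt0 m0.
rewrite /dimf -(tdist_card _ (t := 2 * (m * n))); last by rewrite card_prod !card_ord; lia.
apply: le_trans (grid_tdim_le R m0 n0 mn0 (leqnn _)) _.
by rewrite !divn_small //; nia.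
Qed.

Lemma ratio_unbounded (R : realType) (f g : nat -> R) (C : R) : 0 < C ->
  (forall k, (1 < k)%N -> 0 < g k) ->
  (forall k, (1 < k)%N -> k%:R * g k <= C * f k) ->
  forall M, exists k, (1 < k)%N /\ M < f k / g k.
Proof.
move=> C0 g0 fg M; pose k := (Num.truncn (M * C)).+2.
have k1 : (1 < k)%N by [].
exists k; split => //; rewrite ltr_pdivlMr ?g0 // -(ltr_pM2l C0).
apply: lt_le_trans (fg k k1); rewrite mulrA ltr_pM2r ?g0 // mulrC.
by apply: lt_le_trans (truncnS_gt _) _; rewrite ler_nat.
Qed.

Section GkBounds.
Variables (R : realType) (k : nat).
Let m := ((2 * k + 2) ^ 2)%N.
Let n := ((2 * k + 1) ^ 2)%N.
Let m_gt0 : (0 < m)%N. Proof. by rewrite expn_gt0 addn2. Qed.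
Let n_gt0 : (0 < n)%N. Proof. by rewrite expn_gt0 addn1. Qed.

Lemma Gk_tdim_ge : (k ^ 2)%:R <= dimkf R (Gk k) k.
Proof.
apply: le_trans (grid_tdim_ge R (I := 2 * k + 2) (J := 2 * k + 1) (leqnn _) (leqnn _) _ _).
- by rewrite ler_nat; nia.
- by rewrite /m -mulnn.
- by rewrite /n -mulnn.
Qed.

Lemma Gk_dim1_ge : (k.+1 ^ 2 * k ^ 2)%:R <= dimkf R (Gk k) 1.
Proof.
apply: (grid_tdim_ge R (P := 4) (Q := 3)) => //.
- by rewrite /m -!mulnn; nia.
- by rewrite /n -!mulnn; nia.
Qed.

Lemma Gk_tdim_le : (1 < k)%N -> dimkf R (Gk k) k <= (784 * k ^ 2)%:R.
Proof.
move=> k1; set s := k./2.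
have s0 : (0 < s)%N by rewrite /s -divn2; lia.
have cells N : (N <= m)%N -> ((N - 1) %/ s + 2 <= 28 * k)%N.
  move=> Nm; suff : ((N - 1) %/ s < 27 * k + 1)%N by lia.
  rewrite ltn_divLR //; have : (k <= 3 * s)%N by rewrite /s -divn2; lia.
  by move: Nm; rewrite /m -!mulnn; nia.
apply: le_trans (grid_tdim_le R m_gt0 n_gt0 s0 _) _; first by rewrite /s -divn2; lia.
rewrite ler_nat; apply: leq_trans (leq_mul (cells m (leqnn _)) (cells n _)) _.
  by rewrite /n /m leq_exp2r //; lia.
by rewrite -!mulnn; nia.
Qed.

Lemma Gk_dimf_ge1 : 1 <= dimf R (Gk k).
Proof.
have m_gt1 : (1 < m)%N by rewrite /m -mulnn; nia.
apply: (@dimf_ge1 R _ _ (Ordinal m_gt0, Ordinal n_gt0) (Ordinal m_gt1, Ordinal n_gt0)).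
by rewrite xpair_eqE -val_eqE.
Qed.

Lemma Gk_dimf_le4 : dimf R (Gk k) <= 4.
Proof. exact: grid_dimf_le4. Qed.

End GkBounds.

Theorem theorem3p9 (R : realType) :
  (* dim_{k,f}(G_k) = Theta(k^2) *)
  (exists (c1 c2 : R) (K : nat), (0 < c1)%R /\ (0 < c2)%R /\
     forall k : nat, (1 < k)%N -> (K <= k)%N ->
       (c1 * (k%:R ^+ 2) <= dimkf R (Gk k) k <= c2 * (k%:R ^+ 2))%R) /\
  (* dim_{1,f}(G_k) / dim_{k,f}(G_k) is unbounded *)
  (forall M : R, exists k : nat, (1 < k)%N /\
     (M < dimkf R (Gk k) 1 / dimkf R (Gk k) k)%R) /\
  (* dim_{k,f}(G_k) / dim_f(G_k) is unbounded *)
  (forall M : R, exists k : nat, (1 < k)%N /\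
     (M < dimkf R (Gk k) k / dimf R (Gk k))%R).
Proof.
have tdim_gt0 k : (1 < k)%N -> 0 < dimkf R (Gk k) k.
  by move=> k1; apply: lt_le_trans (Gk_tdim_ge R k); rewrite ltr0n expn_gt0; lia.
split; [|split].
- exists 1, 784%:R, 0%N; split=> //; split=> // k k1 _.
  by rewrite mul1r -natrX Gk_tdim_ge -natrM Gk_tdim_le.
- apply: (ratio_unbounded (C := 784%:R)) => // k k1.
  apply: le_trans (_ : k%:R * (784 * k ^ 2)%:R <= _).
    by rewrite ler_pM2l ?ltr0n ?Gk_tdim_le //; lia.
  apply: le_trans (_ : 784%:R * (k.+1 ^ 2 * k ^ 2)%:R <= _); last first.
    by rewrite ler_wpM2l ?Gk_dim1_ge.
  by rewrite -!natrM ler_nat -!mulnn; nia.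
- apply: (ratio_unbounded (C := 4)) => [|k k1|k k1].
  + by [].
  + by apply: lt_le_trans (Gk_dimf_ge1 R k).
  apply: le_trans (_ : k%:R * 4 <= _).
    by rewrite ler_pM2l ?ltr0n ?Gk_dimf_le4 //; lia.
  apply: le_trans (_ : 4 * (k ^ 2)%:R <= _); last by rewrite ler_pM2l ?Gk_tdim_ge.
  by rewrite mulrC ler_pM2l // ler_nat -mulnn; nia.
Qed.
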